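(* In the shifted geometric model with $N\ge 2$ total observations and $0<p<1$, with $\hat p_{\mathrm{ml}}=1/(\bar{\bar X}-a+1)$ and $\hat p_{\mathrm b}=\frac{N-1}{N}\hat p_{\mathrm{ml}}$, $$E(\hat p_{\mathrm{ml}})=p\,{}_2F_1(1,1;N+1;1-p)=p+\sum_{k=1}^\infty\frac{p(1-p)^k}{\binom{N+k}{k}},$$ so that $\mathrm{Bias}(\hat p_{\mathrm{ml}})=E(\hat p_{\mathrm{ml}})-p=\sum_{k=1}^\infty\frac{p(1-p)^k}{\binom{N+k}{k}}$ and $\mathrm{Bias}(\hat p_{\mathrm b})=-\frac pN+\frac{N-1}{N}\sum_{k=1}^\infty\frac{p(1-p)^k}{\binom{N+k}{k}}$.
   Context: Model: $X_{ij}$, $i=1,\dots,m$, $j=1,\dots,n_i$, are iid with probability mass function $P(X_{ij}=x)=p(1-p)^{x-a}$, $x=a,a+1,\dots$, $a$ a known integer; $N=\sum_i n_i$, $\bar{\bar X}=\frac1N\sum_{i,j}X_{ij}$. ${}_2F_1(a,b;c;z)=\sum_{k\ge0}\frac{(a)_k(b)_k}{(c)_k}\frac{z^k}{k!}$ with Pochhammer symbol $(x)_k=x(x+1)\cdots(x+k-1)$, $(x)_0=1$. *)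

From HB Require Import structures.
From mathcomp Require Import all_boot all_order all_algebra.
From mathcomp Require Import all_classical all_reals.
From mathcomp Require Import topology normedtype sequences esum.
Set Implicit Arguments. Unset Strict Implicit. Unset Printing Implicit Defensive.
Import Order.TTheory GRing.Theory Num.Theory.
Import numFieldNormedType.Exports.
Local Open Scope ring_scope.

Section Defs.
Variable R : realType.

Definition pochhammer (x : R) (k : nat) : R := \prod_(i < k) (x + i%:R).

Definition hyp2F1_term (a b c z : R) (k : nat) : R :=
  pochhammer a k * pochhammer b k / pochhammer c k * z ^+ k / (k`!)%:R.

Definition hyp2F1 (a b c z : R) : R := limn (series (hyp2F1_term a b c z)).

(* index set {(i,j) : i < m, j < n_i} of the observations X_ij *)
Definition obs_index (m : nat) (n : 'I_m -> nat) : finType := {i : 'I_m & 'I_(n i)}.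

Definition Ntot (m : nat) (n : 'I_m -> nat) : nat := (\sum_(i < m) n i)%N.

Definition geom_pmf (a : int) (p : R) (x : int) : R :=
  if (a <= x)%R then p * (1 - p) ^+ `|x - a|%N else 0.

Definition sample_pmf (m : nat) (n : 'I_m -> nat) (a : int) (p : R)
  (x : {ffun obs_index n -> int}) : R :=
  \prod_(t : obs_index n) geom_pmf a p (x t).

Definition sample_support (m : nat) (n : 'I_m -> nat) (a : int) :
  set {ffun obs_index n -> int} := [set x | forall t, (a <= x t)%R].

Definition expect (m : nat) (n : 'I_m -> nat) (a : int) (p : R)
  (f : {ffun obs_index n -> int} -> R) : \bar R :=
  (\esum_(x in @sample_support m n a) (@sample_pmf m n a p x * f x)%:E)%R.

Definition grand_mean (m : nat) (n : 'I_m -> nat) (x : {ffun obs_index n -> int}) : R :=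
  (\sum_(t : obs_index n) (x t)%:~R) / (@Ntot m n)%:R.

Definition p_ml (m : nat) (n : 'I_m -> nat) (a : int) (x : {ffun obs_index n -> int}) : R :=
  (@grand_mean m n x - a%:~R + 1)^-1.

Definition p_b (m : nat) (n : 'I_m -> nat) (a : int) (x : {ffun obs_index n -> int}) : R :=
  ((@Ntot m n)%:R - 1) / (@Ntot m n)%:R * @p_ml m n a x.

Definition bias_term (N : nat) (p : R) (k : nat) : R :=
  p * (1 - p) ^+ k / ('C(N + k, k))%:R.

End Defs.

Arguments obs_index {m} n.
Arguments Ntot {m} n.
Arguments sample_pmf {R m} n a p x.
Arguments sample_support {m} n a.
Arguments expect {R m} n a p f.
Arguments grand_mean {R m} n x.
Arguments p_ml {R m} n a x.
Arguments p_b {R m} n a x.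

From HB Require Import structures.
From mathcomp Require Import all_boot all_order all_algebra.
From mathcomp Require Import all_classical all_reals.
From mathcomp Require Import topology normedtype sequences esum.
From mathcomp Require Import ereal ring lra.
Import Order.TTheory GRing.Theory Num.Theory.
Import numFieldNormedType.Exports.
Unset Printing Implicit Defensive.
Local Open Scope classical_set_scope.
Local Open Scope ring_scope.

(* Write q = 1 - p and F_M(z) = 2F1(1,1;M+1;z) = sum_k z^k / C(M+k,k).
   1. Hypergeometric side: for 0 < z < 1 the series F_M(z) converges and
      satisfies the contiguous relation
         F_{M+1} = (M+1)/M * (F_M - (F_M - 1)/z),
      obtained termwise from 1/C(M+1+k,k) = (M+1)/M (1/C(M+k,k) - 1/C(M+k+1,k+1)).
   2. Probabilistic side: the negative binomial weights
      nb_K(s) = C(K+s,K) p^(K+1) q^s sum to 1, and by induction on K (using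
      the relation of step 1 and Pascal's rule) the "ratio moment"
         sum_s nb_K(s) (K+1)/(K+1+s) = p F_(K+1)(q)
      (an instance of Euler's transformation of 2F1).
   3. Sample side: a sample x with total excess s = sum (x_ij - a) has
      probability p^N q^s, there are C(N-1+s, N-1) of them (compositions of s
      into N parts), and p_ml(x) = N/(N+s).  Summing over the slices of fixed
      excess turns E(c * p_ml) into c times the ratio moment of step 2.
   The theorem follows by adding the bias series, which is p (F_N - 1). *)

Section InverseBinomial.
Variable R : realType.

Lemma fact_neq0 k : (k`!)%:R != 0 :> R.
Proof. by rewrite pnatr_eq0 -lt0n fact_gt0. Qed.

Lemma bin_neq0 M k : ('C(M + k, k))%:R != 0 :> R.
Proof. by rewrite pnatr_eq0 -lt0n bin_gt0 leq_addl. Qed.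

Definition invbin (M k : nat) : R := (k`!)%:R * (M`!)%:R / ((M + k)`!)%:R.

Lemma invbinE M k : invbin M k = ('C(M + k, k))%:R^-1.
Proof.
have := bin_fact (leq_addl M k); rewrite addnK => /(congr1 (fun x => x%:R : R)).
rewrite !natrM => eC; apply: (mulfI (bin_neq0 M k)).
by rewrite /invbin mulrA eC divff ?fact_neq0 ?divff ?bin_neq0.
Qed.

Lemma invbin_ge0 M k : 0 <= invbin M k.
Proof. by rewrite invbinE invr_ge0 ler0n. Qed.

Lemma invbin_le1 M k : invbin M k <= 1.
Proof. by rewrite invbinE invf_le1 ?ler1n ?ltr0n bin_gt0 leq_addl. Qed.

Lemma invbin0 M : invbin M 0 = 1.
Proof. by rewrite invbinE addn0 bin0 invr1. Qed.

(* The termwise contiguous relation behind the recurrence of 2F1(1,1;M+1;z). *)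
Lemma invbin_rec M k : (0 < M)%N ->
  invbin M.+1 k = (M.+1)%:R / M%:R * (invbin M k - invbin M k.+1).
Proof.
move=> M0; rewrite /invbin addSn addnS !factS !natrM.
have Mn0 : M%:R != 0 :> R by rewrite pnatr_eq0 -lt0n.
field; rewrite Mn0 !fact_neq0 /= -natrD addrC natr1 pnatr_eq0 //.
Qed.

Lemma pochhammer1 k : pochhammer 1 k = (k`!)%:R :> R.
Proof.
elim: k => [|k IH]; first by rewrite /pochhammer big_ord0 fact0.
rewrite /pochhammer big_ord_recr /= -/(pochhammer 1 k) IH factS natrM.
by rewrite mulrC addrC natr1.
Qed.

Lemma pochhammerS M k : pochhammer (M.+1)%:R k * (M`!)%:R = ((M + k)`!)%:R :> R.
Proof.
elim: k => [|k IH]; first by rewrite /pochhammer big_ord0 mul1r addn0.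
rewrite /pochhammer big_ord_recr /= -/(pochhammer (M.+1)%:R k).
by rewrite mulrAC IH addnS factS natrM mulrC -natrD addSn.
Qed.

Lemma hyp11_termE (z : R) M k :
  hyp2F1_term 1 1 M.+1%:R z k = invbin M k * z ^+ k.
Proof.
rewrite /hyp2F1_term /invbin !pochhammer1.
have -> : pochhammer M.+1%:R k = ((M + k)`!)%:R / (M`!)%:R :> R.
  by rewrite -pochhammerS mulfK // fact_neq0.
by field; rewrite !fact_neq0.
Qed.

End InverseBinomial.

Section SeriesFacts.
Variable R : realType.

Lemma series_shift (f : R^nat) l : series f @ \oo --> l ->
  series (fun k => f k.+1) @ \oo --> l - f 0%N.
Proof.
move=> fl.
have -> : series (fun k => f k.+1) = (fun n => series f n.+1 - f 0%N).
  by apply/funext => n; rewrite /series /= big_nat_recl //= addrAC subrr add0r.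
by apply: cvgB; [rewrite (cvg_shiftS (series f)) | exact: cvg_cst].
Qed.

Lemma eseries_EFin (u : R^nat) l : series u @ \oo --> l ->
  (\sum_(k <oo) (u k)%:E)%E = l%:E.
Proof.
move=> ul.
have -> : (fun n => \sum_(0 <= k < n) (u k)%:E)%E = EFin \o series u.
  by apply/funext => k; rewrite /= sumEFin.
by rewrite EFin_lim ?(cvg_lim _ ul) //; exact: cvgP ul.
Qed.

End SeriesFacts.

Arguments series_shift {R f l}.
Arguments eseries_EFin {R u l}.

Section Hypergeometric11.
Variables (R : realType) (z : R).
Hypothesis hz : 0 < z < 1.
Local Notation F M := (hyp2F1 1 1 M.+1%:R z).

(* Convergence, by comparison with the geometric series sum z^k. *)
Lemma hyp11_cvg M : series (hyp2F1_term 1 1 M.+1%:R z) @ \oo --> F M.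
Proof.
have z0 : 0 <= z by case/andP: hz => /ltW.
suff : cvgn (series (hyp2F1_term 1 1 M.+1%:R z)) by [].
apply: (@series_le_cvg _ _ (geometric 1 z)) => [k|k|k|].
- by rewrite hyp11_termE mulr_ge0 ?invbin_ge0 ?exprn_ge0.
- by rewrite /= mul1r exprn_ge0.
- by rewrite hyp11_termE /= mul1r ler_piMl ?invbin_le1 ?exprn_ge0.
- apply: cvgP; apply: cvg_geometric_series.
  by rewrite ger0_norm //; case/andP: hz.
Qed.

Lemma hyp11_rec M : (0 < M)%N ->
  F M.+1 = (M.+1)%:R / M%:R * (F M - (F M - 1) / z).
Proof.
move=> M0; apply: cvg_lim => //.
pose t := hyp2F1_term 1 1 M.+1%:R z.
have -> : hyp2F1_term 1 1 M.+2%:R z =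
    (M.+1)%:R / M%:R *: (t - (fun k => z^-1 * t k.+1)).
  apply/funext => k; rewrite !fctE -[_ *: _]/(_ * _) /t !hyp11_termE.
  rewrite invbin_rec // exprS.
  by field; case/andP: hz => /gt_eqF -> _; rewrite pnatr_eq0 -lt0n.
rewrite seriesZ; apply: (cvgZ (cvg_cst _)); rewrite seriesD seriesN.
apply: cvgB; first exact: hyp11_cvg.
rewrite seriesZ mulrC; apply: (cvgZ (cvg_cst _)).
by have := series_shift (hyp11_cvg M); rewrite /t hyp11_termE invbin0 mul1r.
Qed.

End Hypergeometric11.

Arguments hyp11_cvg {R z} hz M.
Arguments hyp11_rec {R z} hz M.

Section NegativeBinomial.
Variables (R : realType) (p : R).
Hypothesis hp : 0 < p < 1.
Let q := 1 - p.
Local Notation F M := (hyp2F1 1 1 M.+1%:R q).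

Let p_gt0 : 0 < p. Proof. by case/andP: hp. Qed.
Let q_bounds : 0 < q < 1.
Proof. by rewrite /q; case/andP: hp => p0 p1; apply/andP; split; lra. Qed.
Let q_gt0 : 0 < q. Proof. by case/andP: q_bounds. Qed.

(* Probability of s failures before the (K+1)-th success. *)
Definition negbin (K s : nat) : R := ('C(K + s, K))%:R * p ^+ K.+1 * q ^+ s.

Lemma negbin_ge0 K s : 0 <= negbin K s.
Proof. by rewrite /negbin !mulr_ge0 ?ler0n ?exprn_ge0 ?ltW. Qed.

Lemma negbin0 K : negbin K 0 = p ^+ K.+1.
Proof. by rewrite /negbin addn0 binn expr0 mul1r mulr1. Qed.

(* Pascal's rule, conditioned on the outcome of the last trial. *)
Lemma negbin_rec K s : negbin K.+1 s.+1 = q * negbin K.+1 s + p * negbin K s.+1.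
Proof.
have e : 'C(K.+1 + s.+1, K.+1) = ('C(K.+1 + s, K.+1) + 'C(K + s.+1, K))%N.
  by rewrite !addSn !addnS binS.
by rewrite /negbin e natrD !exprS; ring.
Qed.

Lemma negbin_series_rec K n :
  series (negbin K.+1) n.+1 = q * series (negbin K.+1) n + p * series (negbin K) n.+1.
Proof.
elim: n => [|n IH].
  by rewrite /series /= !big_nat1 big_geq // mulr0 add0r !negbin0 exprS.
rewrite [in RHS](seriesSr (negbin K.+1) n) [in RHS](seriesSr (negbin K) n.+1).
by rewrite (seriesSr (negbin K.+1) n.+1) IH negbin_rec; ring.
Qed.

(* Induction step for the total mass: the partial sums of negbin (K+1) are
   nondecreasing and bounded by 1, and their limit L solves L = q L + p. *)
Lemma negbin_series_step K : series (negbin K) @ \oo --> (1 : R) ->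
  series (negbin K.+1) @ \oo --> (1 : R).
Proof.
move=> IH.
have nondecr K' : nondecreasing_seq (series (negbin K')).
  by apply: nondecreasing_series => k _ _; apply: negbin_ge0.
have le1_prev j : series (negbin K) j <= 1.
  rewrite -(cvg_lim _ IH) //; apply: nondecreasing_cvgn_le => //; exact: cvgP IH.
have le1 j : series (negbin K.+1) j <= 1.
  elim: j => [|j IHj]; first by rewrite /series /= big_geq.
  rewrite negbin_series_rec -[leRHS](_ : q * 1 + p * 1 = 1); last by rewrite /q; ring.
  by apply: lerD; apply: ler_wpM2l; rewrite ?le1_prev //; apply: ltW.
have cv : cvgn (series (negbin K.+1)).
  by apply: nondecreasing_is_cvgn => //; exists 1 => _ [j _ <-].
set L := limn (series (negbin K.+1)).
have fixL : L = q * L + p.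
  have shifted : (fun j => series (negbin K.+1) j.+1) @ \oo --> L.
    by rewrite (cvg_shiftS (series (negbin K.+1))); exact: cv.
  apply: (cvg_unique (@Rhausdorff R) shifted) => /=.
  have -> : (fun j => series (negbin K.+1) j.+1) =
      (fun j => q * series (negbin K.+1) j + p * series (negbin K) j.+1).
    by apply/funext => j; rewrite negbin_series_rec.
  apply: cvgD; first by apply: (cvgM (cvg_cst _)); exact: cv.
  rewrite -[X in _ --> X]mulr1; apply: (cvgM (cvg_cst _)).
  by rewrite (cvg_shiftS (series (negbin K))).
suff -> : (1 : R) = L by exact: cv.
have : p * (L - 1) = 0 by rewrite -(subrr L) {3}fixL /q; ring.
by move/eqP; rewrite mulf_eq0 gt_eqF //= subr_eq0 => /eqP ->.
Qed.

(* The negative binomial weights form a probability distribution;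
   for K = 0 they are the geometric weights p q^s. *)
Lemma negbin_series K : series (negbin K) @ \oo --> (1 : R).
Proof.
elim: K => [|K IH]; last exact: negbin_series_step.
have -> : negbin 0 = geometric p q.
  by apply/funext => s; rewrite /negbin /= add0n bin0 expr1 mul1r.
have -> : (1 : R) = p / (1 - q) by rewrite /q opprB addrC subrK divff ?gt_eqF.
apply: cvg_geometric_series; rewrite ger0_norm ?ltW //; by case/andP: q_bounds.
Qed.

(* Terms of the moment E[(K+1)/(K+1+S)] for S ~ negbin K. *)
Definition ratio_term (K s : nat) : R := negbin K s * ((K.+1)%:R / (K.+1 + s)%:R).

Lemma ratio_term0 K : ratio_term K 0 = p ^+ K.+1.
Proof. by rewrite /ratio_term negbin0 addn0 divff ?mulr1. Qed.

Lemma ratio_term_rec K s : ratio_term K.+1 s =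
  ((K.+2)%:R / (K.+1)%:R * (p / q)) * (negbin K s.+1 - ratio_term K s.+1).
Proof.
have e : (K.+1 * 'C(K.+1 + s, K.+1) = s.+1 * 'C(K + s.+1, K))%N.
  by rewrite addSn mul_bin_left -addnS addKn mulnC.
have eC : ('C(K.+1 + s, K.+1))%:R = (s.+1)%:R * ('C(K + s.+1, K))%:R / (K.+1)%:R :> R.
  by rewrite -natrM -e natrM mulrC mulKf.
rewrite /ratio_term /negbin eC !exprS !addSn !addnS !mulrS natrD.
field; rewrite (gt_eqF q_gt0) /=.
have K0 := ler0n R K; have s0 := ler0n R s.
by apply/andP; split; apply: lt0r_neq0; lra.
Qed.

(* Euler's transformation in the form needed here:
   sum_s nb_K(s) (K+1)/(K+1+s) = p 2F1(1,1;K+2;q). *)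
Lemma ratio_series K : series (ratio_term K) @ \oo --> p * F K.+1.
Proof.
elim: K => [|K IH].
  have -> : ratio_term 0 = p *: hyp2F1_term 1 1 2%:R q.
    apply/funext => s; rewrite !fctE -[_ *: _]/(_ * _) hyp11_termE invbinE.
    rewrite /ratio_term /negbin add1n binSn add0n bin0 expr1.
    by field; rewrite addrC natr1 pnatr_eq0.
  by rewrite seriesZ; apply: (cvgZ (cvg_cst _)); exact: hyp11_cvg.
have -> : ratio_term K.+1 = ((K.+2)%:R / (K.+1)%:R * (p / q)) *:
    ((fun s => negbin K s.+1) - (fun s => ratio_term K s.+1)).
  by apply/funext => s; rewrite ratio_term_rec.
have -> : p * F K.+2 = ((K.+2)%:R / (K.+1)%:R * (p / q)) *
    ((1 - negbin K 0) - (p * F K.+1 - ratio_term K 0)).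
  rewrite hyp11_rec // negbin0 ratio_term0; move: q_gt0; rewrite /q => q0.
  by field; rewrite gt_eqF //= addrC natr1 pnatr_eq0.
rewrite seriesZ; apply: (cvgZ (cvg_cst _)); rewrite seriesD seriesN.
by apply: cvgB; [exact: series_shift (negbin_series K) | exact: series_shift IH].
Qed.

End NegativeBinomial.

Arguments negbin {R} p K s.
Arguments ratio_term {R} p K s.

Section Sample.
Variables (R : realType) (a : int) (p : R) (m : nat) (n : 'I_m -> nat).
Hypothesis hp : 0 < p < 1.
Let q := 1 - p.
Let T := obs_index n.
Let N := Ntot n.

(* Total excess sum_ij (x_ij - a) of a sample; it is a sufficient statistic. *)
Definition excess (x : {ffun T -> int}) : nat := (\sum_(t : T) absz (x t - a))%N.

Lemma card_obs : #|T| = N.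
Proof. exact: tagnat.card. Qed.

Lemma excess_term x t : sample_support n a x -> x t = a + (absz (x t - a))%:Z.
Proof.
move=> hx; rewrite abszE ger0_norm; first by rewrite addrCA subrr addr0.
by rewrite subr_ge0; apply: hx.
Qed.

Lemma sample_pmfE x : sample_support n a x -> sample_pmf n a p x = p ^+ N * q ^+ excess x.
Proof.
move=> hx; rewrite /sample_pmf.
rewrite (eq_bigr (fun t => p * q ^+ absz (x t - a))); last first.
  by move=> t _; rewrite /geom_pmf (hx t).
by rewrite big_split /= prodr_const card_obs prodrXr.
Qed.

Lemma p_mlE x : (0 < N)%N -> sample_support n a x ->
  p_ml (R:=R) n a x = N%:R / (N + excess x)%:R.
Proof.
move=> N0 hx; rewrite /p_ml /grand_mean.
have -> : \sum_(t : T) (x t)%:~R = N%:R * a%:~R + (excess x)%:R :> R.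
  rewrite (eq_bigr (fun t => a%:~R + (absz (x t - a))%:R)); last first.
    by move=> t _; rewrite {1}(excess_term x t hx) intrD.
  by rewrite big_split /= sumr_const card_obs mulr_natl natr_sum.
have N0' : 0 < N%:R :> R by rewrite ltr0n.
have s0 : 0 <= (excess x)%:R :> R by rewrite ler0n.
rewrite -/N natrD; field.
by apply/andP; split; apply: lt0r_neq0; lra.
Qed.

(* The samples of excess s are in bijection with the (K+1)-tuples in [0,s]
   summing to s, so there are C(K+s,K) of them. *)
Section ExcessSlice.
Variables (K s : nat).
Hypothesis hT : #|T| = K.+1.

Let idx (i : 'I_K.+1) : T := enum_val (cast_ord (esym hT) i).
Let idx_inv (y : T) : 'I_K.+1 := cast_ord hT (enum_rank y).

Let idxK : cancel idx idx_inv.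
Proof. by move=> i; rewrite /idx /idx_inv enum_valK cast_ordKV. Qed.
Let idx_invK : cancel idx_inv idx.
Proof. by move=> y; rewrite /idx /idx_inv cast_ordK enum_rankK. Qed.

Let sum_reindex (G : T -> nat) : (\sum_(y : T) G y = \sum_(i < K.+1) G (idx i))%N.
Proof.
by rewrite (reindex idx) //; exists idx_inv => y _; [exact: idxK | exact: idx_invK].
Qed.

Local Notation Tup := ((K.+1).-tuple 'I_s.+1).

(* Compositions of s into K+1 parts, encoded as tuples with entries <= s. *)
Definition composition : pred Tup := fun t => (\sum_(i <- t) (i : nat) == s)%N.

Definition sample_of (t : Tup) : {ffun T -> int} :=
  [ffun y => a + ((tnth t (idx_inv y) : nat))%:Z].

Definition slice : set {ffun T -> int} :=
  [set x | sample_support n a x /\ excess x = s].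

Lemma sample_of_bij : set_bij [set` composition] slice sample_of.
Proof.
split.
- move=> t /= ct; split; first by move=> y; rewrite ffunE lerDl.
  rewrite /excess (eq_bigr (fun y => (tnth t (idx_inv y) : nat))); last first.
    by move=> y _; rewrite ffunE addrAC subrr add0r.
  rewrite sum_reindex (eq_bigr (fun i => (tnth t i : nat))); last first.
    by move=> i _; rewrite idxK.
  by move: ct; rewrite /composition unfold_in /= big_tuple => /eqP.
- move=> t1 t2 _ _ /ffunP e; apply: eq_from_tnth => i.
  have := e (idx i); rewrite !ffunE idxK => /addrI /eqP.
  by rewrite eqz_nat => /eqP /val_inj.
- move=> x [hx sx].
  have le y : (absz (x y - a) < s.+1)%N.
    by rewrite ltnS -sx /excess (bigD1 y) //=; exact: leq_addr.
  exists [tuple inord (absz (x (idx i) - a)) | i < K.+1].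
    rewrite /= /composition unfold_in /= big_map big_enum /=.
    rewrite (eq_bigr (fun i => absz (x (idx i) - a))); last first.
      by move=> i _; rewrite inordK.
    by apply/eqP; rewrite -sx /excess sum_reindex; apply: eq_bigl.
  apply/ffunP => y; rewrite ffunE tnth_mktuple idx_invK inordK //.
  by rewrite -excess_term.
Qed.

Lemma esum_slice (c : R) : 0 <= c ->
  \esum_(x in slice) (c%:E) = (('C(K + s, K))%:R * c)%:E.
Proof.
move=> c0.
rewrite (reindex_esum [set` composition] slice sample_of (fun=> c%:E)); last first.
  exact: sample_of_bij.
rewrite esum_fset; [|exact: finite_finset|by move=> *; rewrite lee_fin].
rewrite -(bigfs _ (r := enum {: Tup})) ?enum_uniq //; last first.
  by move=> i _; rewrite mem_enum.
rewrite sumEFin big_enum_cond /= sumr_const -card_ord_partitions mulr_natl.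
by congr (_%:E); congr (_ *+ _); apply: eq_card => t; rewrite inE.
Qed.

End ExcessSlice.

Lemma expect_by_excess (f : {ffun T -> int} -> R) (g : nat -> R) K : N = K.+1 ->
  (forall s, 0 <= g s) ->
  (forall x, sample_support n a x -> f x = g (excess x)) ->
  expect n a p f = (\sum_(s <oo) (negbin p K s * g s)%:E)%E.
Proof.
move=> hN g0 hf; rewrite /expect.
have pq_ge0 s : 0 <= p ^+ N * q ^+ s * g s.
  by rewrite /q !mulr_ge0 ?exprn_ge0 ?subr_ge0 //; case/andP: hp => /ltW ? /ltW.
have -> : sample_support n a = \bigcup_(s in setT) slice s.
  by apply/seteqP; split => [x Sx|x [s _ [Sx _]]] //=; exists (excess x).
rewrite esum_bigcup; first last.
- by move=> x [s _ [Sx sx]]; rewrite sample_pmfE // hf // lee_fin.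
- by move=> i j _ _ [x [[_ <-] [_ <-]]].
rewrite -nneseries_esumT; last first.
  by move=> s; apply: esum_ge0 => x [Sx sx]; rewrite sample_pmfE // hf // lee_fin.
apply: eq_eseriesr => s _.
rewrite (eq_esum (b := fun=> (p ^+ N * q ^+ s * g s)%:E)); last first.
  by move=> x [Sx <-]; rewrite sample_pmfE // hf.
rewrite (@esum_slice K) ?card_obs //; congr (_%:E).
by rewrite /negbin -hN; ring.
Qed.

Lemma expect_p_ml_scaled (f : {ffun T -> int} -> R) (c : R) : (0 < N)%N -> 0 <= c ->
  (forall x, sample_support n a x -> f x = c * p_ml n a x) ->
  expect n a p f = (c * (p * hyp2F1 1 1 N.+1%:R q))%:E.
Proof.
move=> N0 c0 hf; have hN : N = N.-1.+1 by rewrite prednK.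
rewrite (@expect_by_excess _ (fun s => c * (N%:R / (N + s)%:R)) _ hN).
- apply: eseries_EFin.
  have -> : (fun s => negbin p N.-1 s * (c * (N%:R / (N + s)%:R)))
      = c *: ratio_term p N.-1.
    by apply/funext => s; rewrite /ratio_term !fctE -hN -[_ *: _]/(_ * _); ring.
  by rewrite seriesZ; apply: (cvgZ (cvg_cst _)); rewrite {2}hN; exact: ratio_series.
- by move=> s; rewrite mulr_ge0 ?divr_ge0 ?ler0n.
- by move=> x hx; rewrite hf // p_mlE.
Qed.

End Sample.

Arguments expect_p_ml_scaled {R a p m n} hp f c.

Lemma bias_series {R : realType} (N : nat) (p : R) : 0 < p < 1 ->
  series (fun k => bias_term N p k.+1) @ \oo
    --> p * (hyp2F1 1 1 N.+1%:R (1 - p) - 1).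
Proof.
move=> hp; have hq : 0 < 1 - p < 1 by case/andP: hp => p0 p1; apply/andP; split; lra.
have -> : (fun k => bias_term N p k.+1)
    = p *: (fun k => hyp2F1_term 1 1 N.+1%:R (1 - p) k.+1).
  apply/funext => k; rewrite !fctE -[_ *: _]/(_ * _) hyp11_termE invbinE.
  by rewrite /bias_term; ring.
rewrite seriesZ; apply: (cvgZ (cvg_cst _)).
by have := series_shift (hyp11_cvg hq N); rewrite hyp11_termE invbin0 mul1r.
Qed.

Theorem mainTheorem4 (R : realType) (a : int) (p : R) (m : nat) (n : 'I_m -> nat) :
  (2 <= Ntot n)%N -> 0 < p < 1 ->
  (cvgn (series (hyp2F1_term 1 1 (Ntot n).+1%:R (1 - p))) /\
  [/\ cvgn (series (fun k => bias_term (Ntot n) p k.+1)),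
      expect n a p (p_ml n a) = (p * hyp2F1 1 1 (Ntot n).+1%:R (1 - p))%:E,
      p * hyp2F1 1 1 (Ntot n).+1%:R (1 - p)
        = p + limn (series (fun k => bias_term (Ntot n) p k.+1)),
      (expect n a p (p_ml n a) - p%:E)%E
        = (limn (series (fun k => bias_term (Ntot n) p k.+1)))%:E &
      (expect n a p (p_b n a) - p%:E)%E
        = (- p / (Ntot n)%:R + ((Ntot n)%:R - 1) / (Ntot n)%:R
             * limn (series (fun k => bias_term (Ntot n) p k.+1)))%:E]).
Proof.
move=> N2 hp; set N := Ntot n in N2 *.
have N0 : (0 < N)%N by apply: leq_trans N2.
have hq : 0 < 1 - p < 1 by case/andP: hp => p0 p1; apply/andP; split; lra.
set F := hyp2F1 1 1 N.+1%:R (1 - p).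
have bias := bias_series N p hp.
have biasE : limn (series (fun k => bias_term N p k.+1)) = p * (F - 1).
  exact: cvg_lim bias.
have Eml : expect n a p (p_ml n a) = (p * F)%:E.
  by rewrite (expect_p_ml_scaled hp _ 1) ?mul1r // => x _; rewrite mul1r.
have Epb : expect n a p (p_b n a) = ((N%:R - 1) / N%:R * (p * F))%:E.
  apply: expect_p_ml_scaled => //.
  by rewrite divr_ge0 ?ler0n // subr_ge0 ler1n ltnW.
have Nn0 : N%:R != 0 :> R by rewrite pnatr_eq0 -lt0n.
split; first exact: hyp11_cvg.
split; first exact: cvgP bias.
- exact: Eml.
- by rewrite biasE; ring.
- by rewrite Eml biasE -EFinB; congr (_%:E); ring.
- by rewrite Epb biasE -EFinB; congr (_%:E); field.
Qed.
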